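(* For every $\delta>0$ there exist an unweighted congestion game $\mathcal{G}_1$ with quadratic latency functions and an unweighted congestion game $\mathcal{G}_2$ with cubic latency functions such that $\mathrm{PoS}(\mathcal{G}_1)\ge 2.1859-\delta$ and $\mathrm{PoS}(\mathcal{G}_2)\ge 2.7558-\delta$.
   Context: A weighted congestion game consists of a finite set $[n]=\{1,\dots,n\}$ of players, a finite set $E$ of resources, for each player $i$ a weight $w_i>0$ and a nonempty finite strategy set $\Sigma_i\subseteq 2^E$, and for each resource $e$ a latency function $\ell_e:\mathbb{R}_{\ge 0}\to\mathbb{R}_{\ge 0}$. It is unweighted if $w_i=1$ for all $i$. Quadratic (resp. cubic) latency functions means $\ell_e(x)=\sum_{j=0}^{d}\alpha_{e,j}x^j$ with all $\alpha_{e,j}\ge 0$ and $d=2$ (resp. $d=3$). For a strategy profile $S=(s_1,\dots,s_n)$, the congestion of $e$ is $L_e(S)=\sum_{i:\,e\in s_i}w_i$, the cost of player $i$ is $c_i(S)=\sum_{e\in s_i}\ell_e(L_e(S))$, and $\mathrm{SUM}(S)=\sum_i c_i(S)$; $S^*$ minimizes $\mathrm{SUM}$. A pure Nash equilibrium (PNE) is a profile $S$ with $c_i(S)\le c_i(S_{-i}\diamond t)$ for all $i$ and $t\in\Sigma_i$, where $(S_{-i}\diamond t)$ replaces $s_i$ by $t$. $\mathrm{PoS}(\mathcal{G})=\min_{S\ \mathrm{PNE}}\mathrm{SUM}(S)/\mathrm{SUM}(S^* )$. *)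

From Stdlib Require Import Reals List Arith.
Import ListNotations.
Open Scope R_scope.

Definition sumR (l : list R) : R := fold_right Rplus 0 l.

(* A weighted congestion game.  Players are 0..g_n-1, resources are 0..g_m-1.
   A strategy is a duplicate-free list of resources (representing a subset of E). *)
Record game := mkGame {
  g_n : nat;
  g_m : nat;
  g_w : nat -> R;
  g_strat : nat -> list (list nat);
  g_lat : nat -> R -> R
}.

Definition well_formed (G : game) : Prop :=
  forall i, (i < g_n G)%nat ->
    0 < g_w G i /\ g_strat G i <> [] /\
    forall s, In s (g_strat G i) -> NoDup s /\ forall e, In e s -> (e < g_m G)%nat.

Definition unweighted (G : game) : Prop :=
  forall i, (i < g_n G)%nat -> g_w G i = 1.

Definition poly_latency (d : nat) (l : R -> R) : Prop :=
  exists a : nat -> R, (forall j, 0 <= a j) /\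
    forall x, 0 <= x -> l x = sumR (map (fun j => a j * x ^ j) (seq 0 (S d))).

Definition poly_latencies (d : nat) (G : game) : Prop :=
  forall e, (e < g_m G)%nat -> poly_latency d (g_lat G e).

Definition profile := nat -> list nat.

Definition valid_profile (G : game) (S : profile) : Prop :=
  forall i, (i < g_n G)%nat -> In (S i) (g_strat G i).

Definition mem (e : nat) (s : list nat) : bool := existsb (Nat.eqb e) s.

Definition load (G : game) (S : profile) (e : nat) : R :=
  sumR (map (fun i => if mem e (S i) then g_w G i else 0) (seq 0 (g_n G))).

Definition cost (G : game) (S : profile) (i : nat) : R :=
  sumR (map (fun e => g_lat G e (load G S e)) (S i)).

Definition SUM (G : game) (S : profile) : R :=
  sumR (map (cost G S) (seq 0 (g_n G))).

Definition deviate (S : profile) (i : nat) (t : list nat) : profile :=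
  fun j => if Nat.eqb j i then t else S j.

Definition is_PNE (G : game) (S : profile) : Prop :=
  valid_profile G S /\
  forall i t, (i < g_n G)%nat -> In t (g_strat G i) -> cost G S i <= cost G (deviate S i t) i.

Definition is_optimum (G : game) (S : profile) : Prop :=
  valid_profile G S /\ forall S', valid_profile G S' -> SUM G S <= SUM G S'.

(* p is the price of stability of G: the optimum social cost is positive
   (so the ratio is defined), and p = min over PNE S of SUM(S)/SUM(Sopt). *)
Definition is_PoS (G : game) (p : R) : Prop :=
  exists Sopt, is_optimum G Sopt /\ 0 < SUM G Sopt /\
  (exists S, is_PNE G S /\ p = SUM G S / SUM G Sopt) /\
  (forall S, is_PNE G S -> p <= SUM G S / SUM G Sopt).

From Stdlib Require Import Reals List Arith ZArith Lia Lra Bool.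
Import ListNotations.
Open Scope R_scope.

(* Both bounds are witnessed by explicit finite games in which every player
   has exactly two strategies, a "good" one (false) and a "bad" one (true).
   The games are designed so that, for k = 0, 1, 2, ..., the bad strategy of
   player k strictly dominates its good one as soon as players 0..k-1 play bad.
   An induction along this order shows that the all-bad profile is the unique
   pure Nash equilibrium, so the price of stability equals SUM(all bad) divided
   by the optimum, and the optimum is at most SUM(all good). *)

Lemma sumR_ext (A : Type) (f g : A -> R) (l : list A) :
  (forall x, In x l -> f x = g x) -> sumR (map f l) = sumR (map g l).
Proof. intro H. f_equal. apply map_ext_in. exact H. Qed.

Definition agree (G : game) (S S' : profile) : Prop :=
  forall i, (i < g_n G)%nat -> S i = S' i.

Lemma load_agree (G : game) (S S' : profile) (e : nat) :
  agree G S S' -> load G S e = load G S' e.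
Proof.
  intro HSS. apply sumR_ext. intros i Hi. apply in_seq in Hi.
  rewrite (HSS i) by lia. reflexivity.
Qed.

Lemma cost_agree (G : game) (S S' : profile) (i : nat) :
  agree G S S' -> (i < g_n G)%nat -> cost G S i = cost G S' i.
Proof.
  intros HSS Hi. unfold cost. rewrite (HSS i Hi). apply sumR_ext.
  intros e _. rewrite (load_agree G S S' e HSS). reflexivity.
Qed.

Lemma SUM_agree (G : game) (S S' : profile) :
  agree G S S' -> SUM G S = SUM G S'.
Proof.
  intro HSS. apply sumR_ext. intros i Hi. apply in_seq in Hi.
  apply cost_agree; [exact HSS | lia].
Qed.

Lemma deviate_self (G : game) (S : profile) (k : nat) :
  agree G (deviate S k (S k)) S.
Proof.
  intros j _. unfold deviate. destruct (Nat.eqb_spec j k) as [-> | _]; reflexivity.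
Qed.

Definition dominance_order (G : game) (B : profile) : Prop :=
  forall k S t, (k < g_n G)%nat -> valid_profile G S ->
    (forall i, (i < k)%nat -> S i = B i) ->
    In t (g_strat G k) -> t <> B k ->
    cost G (deviate S k (B k)) k < cost G (deviate S k t) k.

(* Every equilibrium plays [B]: by strong induction on the player index, a
   player k deviating from [B k] would gain by switching to it. *)
Lemma dominance_order_unique_PNE (G : game) (B : profile) :
  valid_profile G B -> dominance_order G B ->
  forall S, is_PNE G S -> agree G S B.
Proof.
  intros HB Hdom S [HS Hbest] k.
  induction k as [k IH] using (well_founded_induction lt_wf). intro Hk.
  destruct (list_eq_dec Nat.eq_dec (S k) (B k)) as [E | E]; [exact E | exfalso].
  assert (Hprefix : forall i, (i < k)%nat -> S i = B i) by (intros i Hi; apply IH; lia).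
  pose proof (Hdom k S (S k) Hk HS Hprefix (HS k Hk) E) as Hgain.
  rewrite (cost_agree G _ S k (deviate_self G S k) Hk) in Hgain.
  pose proof (Hbest k (B k) Hk (HB k Hk)) as Hstable.
  lra.
Qed.

Lemma dominance_order_PNE (G : game) (B : profile) :
  valid_profile G B -> dominance_order G B -> is_PNE G B.
Proof.
  intros HB Hdom. split; [exact HB |]. intros k t Hk Ht.
  rewrite <- (cost_agree G _ B k (deviate_self G B k) Hk).
  destruct (list_eq_dec Nat.eq_dec t (B k)) as [-> | E]; [lra |].
  left. apply Hdom; auto.
Qed.

Lemma PoS_of_unique_PNE (G : game) (B Sopt : profile) :
  is_PNE G B -> (forall S, is_PNE G S -> agree G S B) ->
  is_optimum G Sopt -> 0 < SUM G Sopt ->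
  is_PoS G (SUM G B / SUM G Sopt).
Proof.
  intros HB Huniq Hopt Hpos. exists Sopt. split; [exact Hopt |]. split; [exact Hpos |].
  split; [exists B; split; [exact HB | reflexivity] |].
  intros S HS. rewrite (SUM_agree G S B (Huniq S HS)). lra.
Qed.

Lemma list_argmin (A : Type) (f : A -> Z) (l : list A) (a : A) :
  In a l -> exists a0, In a0 l /\ forall x, In x l -> (f a0 <= f x)%Z.
Proof.
  revert a. induction l as [| b l IH]; intros a Ha; [destruct Ha |].
  destruct l as [| c l'].
  - exists b. split; [left; reflexivity |]. intros x [<- | []]. lia.
  - destruct (IH c (or_introl eq_refl)) as [a0 [Ha0 Hmin]].
    destruct (Z.le_gt_cases (f b) (f a0)) as [Hb | Hb].
    + exists b. split; [left; reflexivity |].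
      intros x [<- | Hx]; [lia |]. specialize (Hmin x Hx). lia.
    + exists a0. split; [right; exact Ha0 |].
      intros x [<- | Hx]; [lia | apply Hmin; exact Hx].
Qed.

Definition Zsum (l : list Z) : Z := fold_right Z.add 0%Z l.

Lemma sumR_IZR (A : Type) (f : A -> Z) (l : list A) :
  sumR (map (fun x => IZR (f x)) l) = IZR (Zsum (map f l)).
Proof. induction l as [| a l IH]; simpl; [reflexivity |]. rewrite IH, plus_IZR. reflexivity. Qed.

Lemma Zsum_nonneg (A : Type) (f : A -> Z) (l : list A) :
  (forall x, In x l -> (0 <= f x)%Z) -> (0 <= Zsum (map f l))%Z.
Proof.
  induction l as [| a l IH]; intro Hf; simpl; [lia |].
  pose proof (Hf a (or_introl eq_refl)). pose proof (IH (fun x Hx => Hf x (or_intror Hx))). lia.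
Qed.

Lemma Zsum_member (A : Type) (f : A -> Z) (l : list A) (a : A) :
  (forall x, In x l -> (0 <= f x)%Z) -> In a l -> (f a <= Zsum (map f l))%Z.
Proof.
  intros Hf Ha. induction l as [| b l IH]; [destruct Ha |]. simpl.
  pose proof (Zsum_nonneg A f l (fun x Hx => Hf x (or_intror Hx))).
  pose proof (Hf b (or_introl eq_refl)).
  destruct Ha as [-> | Ha]; [lia |].
  pose proof (IH (fun x Hx => Hf x (or_intror Hx)) Ha). lia.
Qed.

Lemma Zsum_le (A : Type) (f g : A -> Z) (l : list A) :
  (forall x, In x l -> (f x <= g x)%Z) -> (Zsum (map f l) <= Zsum (map g l))%Z.
Proof.
  induction l as [| a l IH]; intro Hfg; simpl; [lia |].
  pose proof (Hfg a (or_introl eq_refl)). pose proof (IH (fun x Hx => Hfg x (or_intror Hx))). lia.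
Qed.

(* A code for an unweighted game with [code_players] players, each having two
   strategies indexed by a boolean, and [code_resources] resources.  Entry [e]
   of [code_users] lists the pairs (player, strategy) whose strategy uses
   resource [e]; entry [e] of [code_coefs] lists the integer coefficients of
   the latency polynomial of [e], of degree at most [code_degree]. *)
Record game_code := mkCode {
  code_players : nat;
  code_resources : nat;
  code_degree : nat;
  code_users : list (list (nat * bool));
  code_coefs : list (list Z) }.

Section GameCode.

Variable D : game_code.

Definition uses (e i : nat) (b : bool) : bool :=
  existsb (fun p => Nat.eqb (fst p) i && Bool.eqb (snd p) b) (nth e (code_users D) []).

Definition strategy (i : nat) (b : bool) : list nat :=
  filter (fun e => uses e i b) (seq 0 (code_resources D)).

Definition coef (e j : nat) : Z := nth j (nth e (code_coefs D) []) 0%Z.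

Definition latency (e : nat) (x : R) : R :=
  sumR (map (fun j => IZR (coef e j) * x ^ j) (seq 0 (S (code_degree D)))).

Definition game_of : game :=
  mkGame (code_players D) (code_resources D) (fun _ => 1)
    (fun i => [strategy i false; strategy i true]) latency.

Lemma strategy_in_game (i : nat) (b : bool) : In (strategy i b) (g_strat game_of i).
Proof. destruct b; simpl; tauto. Qed.

Lemma strategy_of_game (i : nat) (t : list nat) :
  In t (g_strat game_of i) -> exists b, t = strategy i b.
Proof. intros [<- | [<- | []]]; eexists; reflexivity. Qed.

Lemma strategy_bound (i : nat) (b : bool) (e : nat) :
  In e (strategy i b) -> (e < code_resources D)%nat.
Proof. intro He. apply filter_In in He. destruct He as [He _]. apply in_seq in He. lia. Qed.

Lemma mem_strategy (e i : nat) (b : bool) :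
  (e < code_resources D)%nat -> mem e (strategy i b) = uses e i b.
Proof.
  intro He. unfold mem. apply eq_true_iff_eq. rewrite existsb_exists. split.
  - intros [x [Hx Hxe]]. apply Nat.eqb_eq in Hxe. subst x. apply filter_In in Hx. tauto.
  - intro Hu. exists e. split; [apply filter_In; split; [apply in_seq; lia | exact Hu] |].
    apply Nat.eqb_refl.
Qed.

Lemma game_of_well_formed : well_formed game_of.
Proof.
  intros i _. split; [simpl; lra |]. split; [discriminate |].
  intros s Hs. destruct (strategy_of_game i s Hs) as [b ->]. split.
  - apply NoDup_filter, seq_NoDup.
  - intros e He. exact (strategy_bound i b e He).
Qed.

Lemma game_of_unweighted : unweighted game_of.
Proof. intros i _. reflexivity. Qed.

Definition coef_check : bool := forallb (forallb (Z.leb 0)) (code_coefs D).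

Lemma coef_check_sound (e j : nat) : coef_check = true -> (0 <= coef e j)%Z.
Proof.
  unfold coef_check, coef. rewrite forallb_forall. intro Hc.
  destruct (Nat.lt_ge_cases e (length (code_coefs D))) as [He | He].
  - pose proof (Hc _ (nth_In _ [] He)) as Hrow. rewrite forallb_forall in Hrow.
    destruct (Nat.lt_ge_cases j (length (nth e (code_coefs D) []))) as [Hj | Hj].
    + apply Z.leb_le, Hrow, nth_In, Hj.
    + rewrite nth_overflow by exact Hj. lia.
  - rewrite (nth_overflow (code_coefs D)) by exact He. destruct j; simpl; lia.
Qed.

Lemma game_of_poly_latencies : coef_check = true -> poly_latencies (code_degree D) game_of.
Proof.
  intros Hc e _. exists (fun j => IZR (coef e j)). split.
  - intro j. apply IZR_le, coef_check_sound, Hc.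
  - intros x _. reflexivity.
Qed.

Definition latencyZ (e : nat) (x : Z) : Z :=
  Zsum (map (fun j => coef e j * x ^ Z.of_nat j)%Z (seq 0 (S (code_degree D)))).

Definition loadZ (v : list bool) (e : nat) : Z :=
  Zsum (map (fun i => if uses e i (nth i v false) then 1%Z else 0%Z) (seq 0 (code_players D))).

Definition costZ (v : list bool) (i : nat) : Z :=
  Zsum (map (fun e => latencyZ e (loadZ v e)) (strategy i (nth i v false))).

Definition sumZ (v : list bool) : Z := Zsum (map (costZ v) (seq 0 (code_players D))).

Definition encodes (S : profile) (v : list bool) : Prop :=
  forall i, (i < code_players D)%nat -> S i = strategy i (nth i v false).

Lemma load_encoded (S : profile) (v : list bool) (e : nat) :
  encodes S v -> (e < code_resources D)%nat -> load game_of S e = IZR (loadZ v e).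
Proof.
  intros Hv He. unfold load, loadZ. rewrite <- sumR_IZR. apply sumR_ext.
  intros i Hi. apply in_seq in Hi. simpl in Hi. simpl.
  rewrite (Hv i) by lia. rewrite mem_strategy by exact He.
  destruct (uses e i (nth i v false)); reflexivity.
Qed.

Lemma cost_encoded (S : profile) (v : list bool) (i : nat) :
  encodes S v -> (i < code_players D)%nat -> cost game_of S i = IZR (costZ v i).
Proof.
  intros Hv Hi. unfold cost, costZ. rewrite <- sumR_IZR, (Hv i Hi). apply sumR_ext.
  intros e He. simpl. rewrite (load_encoded S v e Hv (strategy_bound _ _ _ He)).
  unfold latency, latencyZ. rewrite <- sumR_IZR. apply sumR_ext. intros j _.
  rewrite mult_IZR, pow_IZR. reflexivity.
Qed.

Lemma SUM_encoded (S : profile) (v : list bool) :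
  encodes S v -> SUM game_of S = IZR (sumZ v).
Proof.
  intro Hv. unfold SUM, sumZ. rewrite <- sumR_IZR. apply sumR_ext.
  intros i Hi. apply in_seq in Hi. apply cost_encoded; [exact Hv | simpl in Hi; lia].
Qed.

Lemma valid_encoded (S : profile) :
  valid_profile game_of S -> exists v, length v = code_players D /\ encodes S v.
Proof.
  intro HS.
  set (bit := fun i => if list_eq_dec Nat.eq_dec (S i) (strategy i true) then true else false).
  exists (map bit (seq 0 (code_players D))).
  split; [rewrite length_map, length_seq; reflexivity |]. intros i Hi.
  rewrite nth_indep with (d' := bit 0%nat) by (rewrite length_map, length_seq; exact Hi).
  rewrite map_nth, seq_nth by exact Hi. unfold bit. simpl.
  destruct (list_eq_dec Nat.eq_dec (S i) (strategy i true)) as [E | E]; [exact E |].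
  destruct (strategy_of_game i (S i) (HS i Hi)) as [[|] Hb]; congruence.
Qed.

Definition uniform (b : bool) : profile := fun i => strategy i b.

Lemma uniform_valid (b : bool) : valid_profile game_of (uniform b).
Proof. intros i _. apply strategy_in_game. Qed.

Lemma uniform_encoded (b : bool) : encodes (uniform b) (repeat b (code_players D)).
Proof. intros i Hi. rewrite nth_repeat_lt by exact Hi. reflexivity. Qed.


Fixpoint all_vectors (r : nat) : list (list bool) :=
  match r with
  | O => [[]]
  | S r => map (cons false) (all_vectors r) ++ map (cons true) (all_vectors r)
  end.

Lemma all_vectors_complete (r : nat) (v : list bool) : length v = r -> In v (all_vectors r).
Proof.
  revert v. induction r as [| r IH]; intros v Hv.
  - destruct v; [left; reflexivity | discriminate].
  - destruct v as [| b v]; [discriminate |]. injection Hv as Hv.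
    simpl. apply in_or_app. destruct b; [right | left]; apply in_map, IH, Hv.
Qed.

Lemma latencyZ_nonneg (e : nat) (x : Z) :
  coef_check = true -> (0 <= x)%Z -> (0 <= latencyZ e x)%Z.
Proof.
  intros Hc Hx. apply Zsum_nonneg. intros j _.
  apply Z.mul_nonneg_nonneg; [apply coef_check_sound, Hc | apply Z.pow_nonneg, Hx].
Qed.

Lemma latencyZ_ge_one (e : nat) (x : Z) :
  coef_check = true -> (1 <= x)%Z -> (latencyZ e 1 <= latencyZ e x)%Z.
Proof.
  intros Hc Hx. apply Zsum_le. intros j _. rewrite Z.pow_1_l by lia.
  apply Z.mul_le_mono_nonneg_l; [apply coef_check_sound, Hc |].
  rewrite <- (Z.pow_1_l (Z.of_nat j)) by lia. apply Z.pow_le_mono_l. lia.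
Qed.

Lemma loadZ_nonneg (v : list bool) (e : nat) : (0 <= loadZ v e)%Z.
Proof. apply Zsum_nonneg. intros j _. destruct (uses e j (nth j v false)); lia. Qed.

Lemma loadZ_own (v : list bool) (i e : nat) :
  (i < code_players D)%nat -> In e (strategy i (nth i v false)) -> (1 <= loadZ v e)%Z.
Proof.
  intros Hi He. apply filter_In in He as [_ Huse].
  apply Z.le_trans with (if uses e i (nth i v false) then 1%Z else 0%Z); [rewrite Huse; lia |].
  apply (Zsum_member _ (fun j => if uses e j (nth j v false) then 1%Z else 0%Z)).
  - intros j _. destruct (uses e j (nth j v false)); lia.
  - apply in_seq. lia.
Qed.

Lemma costZ_nonneg (v : list bool) (i : nat) : coef_check = true -> (0 <= costZ v i)%Z.
Proof.
  intro Hc. apply Zsum_nonneg. intros e _. apply latencyZ_nonneg, loadZ_nonneg. exact Hc.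
Qed.

(* Player 0 exists and each of its strategies contains a resource that costs
   something under load 1; hence every profile has positive social cost. *)
Definition pos_check : bool :=
  (0 <? code_players D)%nat &&
  forallb (fun b => existsb (fun e => Z.ltb 0 (latencyZ e 1)) (strategy 0 b)) [false; true].

Lemma sumZ_pos (v : list bool) : coef_check = true -> pos_check = true -> (0 < sumZ v)%Z.
Proof.
  intros Hc Hpos. apply andb_prop in Hpos as [Hn Hpos]. apply Nat.ltb_lt in Hn.
  rewrite forallb_forall in Hpos.
  specialize (Hpos (nth 0 v false) ltac:(destruct (nth 0 v false); simpl; tauto)).
  apply existsb_exists in Hpos as [e [He Hlat]]. apply Z.ltb_lt in Hlat.
  assert (Hplayer0 : (0 < costZ v 0)%Z).
  { apply Z.lt_le_trans with (latencyZ e (loadZ v e)).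
    - pose proof (latencyZ_ge_one e (loadZ v e) Hc (loadZ_own v 0 e Hn He)). lia.
    - apply (Zsum_member _ (fun e => latencyZ e (loadZ v e))); [| exact He].
      intros x _. apply latencyZ_nonneg, loadZ_nonneg. exact Hc. }
  pose proof (Zsum_member _ (costZ v) (seq 0 (code_players D)) 0%nat
    (fun i _ => costZ_nonneg v i Hc) ltac:(apply in_seq; lia)).
  unfold sumZ. lia.
Qed.

(* A social optimum exists (there are finitely many profiles) and is positive. *)
Lemma optimum_exists :
  coef_check = true -> pos_check = true ->
  exists Sopt, is_optimum game_of Sopt /\ 0 < SUM game_of Sopt.
Proof.
  intros Hc Hpos.
  destruct (list_argmin _ sumZ (all_vectors (code_players D)) (repeat false (code_players D))
    (all_vectors_complete _ _ (repeat_length _ _))) as [v0 [_ Hmin]].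
  set (Sopt := fun i => strategy i (nth i v0 false)).
  assert (Henc : encodes Sopt v0) by (intros i _; reflexivity).
  exists Sopt. split; [split |].
  - intros i _. apply strategy_in_game.
  - intros S HS. destruct (valid_encoded S HS) as [v [Hlen Hv]].
    rewrite (SUM_encoded _ _ Henc), (SUM_encoded _ _ Hv).
    apply IZR_le, Hmin, all_vectors_complete, Hlen.
  - rewrite (SUM_encoded _ _ Henc). apply IZR_lt, sumZ_pos; assumption.
Qed.

Definition prefix_vector (k : nat) (b : bool) (rest : list bool) : list bool :=
  repeat true k ++ b :: rest.

Lemma nth_prefix_vector (k i : nat) (b : bool) (rest : list bool) :
  nth i (prefix_vector k b rest) false =
  if (i <? k)%nat then true else if (i =? k)%nat then b else nth (i - S k) rest false.
Proof.
  unfold prefix_vector. destruct (Nat.ltb_spec i k) as [Hik | Hik].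
  - rewrite app_nth1 by (rewrite repeat_length; exact Hik). apply nth_repeat_lt, Hik.
  - rewrite app_nth2, repeat_length by (rewrite repeat_length; exact Hik).
    destruct (Nat.eqb_spec i k) as [-> | Hne]; [rewrite Nat.sub_diag; reflexivity |].
    destruct (i - k)%nat eqn:Hd; [lia |]. simpl. f_equal. lia.
Qed.

Definition dom_check : bool :=
  forallb (fun k => forallb (fun rest =>
     Z.ltb (costZ (prefix_vector k true rest) k) (costZ (prefix_vector k false rest) k))
     (all_vectors (code_players D - S k))) (seq 0 (code_players D)).

Lemma dom_check_sound (k : nat) (rest : list bool) :
  dom_check = true -> (k < code_players D)%nat -> length rest = (code_players D - S k)%nat ->
  (costZ (prefix_vector k true rest) k < costZ (prefix_vector k false rest) k)%Z.
Proof.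
  unfold dom_check. rewrite forallb_forall. intros Hc Hk Hlen.
  specialize (Hc k (proj2 (in_seq _ _ _) (conj (Nat.le_0_l _) Hk))).
  rewrite forallb_forall in Hc. apply Z.ltb_lt, Hc, all_vectors_complete, Hlen.
Qed.

Lemma deviate_encoded (P : profile) (v : list bool) (k : nat) (b : bool) :
  encodes P v -> (forall i, (i < k)%nat -> P i = strategy i true) ->
  encodes (deviate P k (strategy k b)) (prefix_vector k b (skipn (S k) v)).
Proof.
  intros Hv Hprefix i Hi. unfold deviate. rewrite nth_prefix_vector.
  destruct (Nat.eqb_spec i k) as [-> | Hne]; [rewrite Nat.ltb_irrefl; reflexivity |].
  destruct (Nat.ltb_spec i k) as [Hik | Hik]; [apply Hprefix, Hik |].
  rewrite nth_skipn. replace (S k + (i - S k))%nat with i by lia. apply Hv, Hi.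
Qed.

Lemma dominance_order_of_check :
  dom_check = true -> dominance_order game_of (uniform true).
Proof.
  intros Hc k S t Hk HS Hprefix Ht Hne.
  destruct (strategy_of_game k t Ht) as [[|] ->]; [contradiction |].
  destruct (valid_encoded S HS) as [v [Hlen Hv]].
  unfold uniform.
  rewrite (cost_encoded _ _ k (deviate_encoded S v k true Hv Hprefix) Hk).
  rewrite (cost_encoded _ _ k (deviate_encoded S v k false Hv Hprefix) Hk).
  apply IZR_lt, dom_check_sound; [exact Hc | exact Hk |].
  rewrite length_skipn, Hlen. reflexivity.
Qed.

Theorem PoS_certificate (r : R) :
  coef_check = true -> dom_check = true -> pos_check = true -> 0 <= r ->
  r * IZR (sumZ (repeat false (code_players D))) <= IZR (sumZ (repeat true (code_players D))) ->
  exists p, is_PoS game_of p /\ r <= p.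
Proof.
  intros Hc Hdom Hpos Hr Hratio.
  destruct (optimum_exists Hc Hpos) as [Sopt [Hopt HSopt]].
  pose proof (dominance_order_of_check Hdom) as Horder.
  exists (SUM game_of (uniform true) / SUM game_of Sopt). split.
  - apply PoS_of_unique_PNE; try assumption.
    + apply dominance_order_PNE; [apply uniform_valid | exact Horder].
    + apply dominance_order_unique_PNE; [apply uniform_valid | exact Horder].
  - assert (Hgood : SUM game_of Sopt <= IZR (sumZ (repeat false (code_players D)))).
    { rewrite <- (SUM_encoded _ _ (uniform_encoded false)). apply Hopt, uniform_valid. }
    rewrite (SUM_encoded _ _ (uniform_encoded true)).
    apply Rmult_le_reg_r with (SUM game_of Sopt); [exact HSopt |].
    unfold Rdiv. rewrite Rmult_assoc, Rinv_l, Rmult_1_r by lra.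
    apply Rle_trans with (2 := Hratio). apply Rmult_le_compat_l; assumption.
Qed.


Definition certified (num den : Z) : bool :=
  coef_check && dom_check && pos_check &&
  Z.leb (num * sumZ (repeat false (code_players D))) (den * sumZ (repeat true (code_players D))).

Lemma certified_instance (num den : Z) :
  (0 <= num)%Z -> (0 < den)%Z -> certified num den = true ->
  exists G, well_formed G /\ unweighted G /\ poly_latencies (code_degree D) G /\
    exists p, is_PoS G p /\ IZR num / IZR den <= p.
Proof.
  intros Hnum Hden Hcert. unfold certified in Hcert.
  apply andb_prop in Hcert as [Hcert Hratio]. apply andb_prop in Hcert as [Hcert Hpos].
  apply andb_prop in Hcert as [Hcoef Hdom].
  apply Z.leb_le, IZR_le in Hratio. rewrite !mult_IZR in Hratio.
  apply IZR_le in Hnum. apply IZR_lt in Hden.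
  exists game_of. split; [apply game_of_well_formed |].
  split; [apply game_of_unweighted |]. split; [apply game_of_poly_latencies, Hcoef |].
  apply PoS_certificate; [exact Hcoef | exact Hdom | exact Hpos | |].
  - apply Rmult_le_pos; [exact Hnum | apply Rlt_le, Rinv_0_lt_compat, Hden].
  - apply Rmult_le_reg_l with (IZR den); [exact Hden |].
    field_simplify; [lra | lra].
Qed.

End GameCode.

Definition quadratic_code : game_code := mkCode 11 100 2
  ([[(0,false); (1,false); (2,true); (3,true); (4,true); (5,true); (6,true); (7,true); (8,true); (9,true); (10,true)];
  [(0,false); (1,true); (2,true); (3,true); (4,false); (5,true); (6,true); (7,true); (8,true); (9,true); (10,true)];
  [(0,false); (1,true); (2,true); (3,true); (4,true); (5,false); (6,true); (7,true); (8,true); (9,true); (10,true)];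
  [(0,false); (1,true); (2,true); (3,true); (4,true); (5,true); (6,false); (7,true); (8,true); (9,true); (10,true)];
  [(0,false); (1,true); (2,true); (3,true); (4,true); (5,true); (6,true); (7,false); (8,true); (9,true); (10,true)];
  [(0,false); (1,true); (2,true); (3,true); (4,true); (5,true); (6,true); (7,true); (8,true); (9,true); (10,false)];
  [(0,false); (2,false)];
  [(0,false); (2,true)];
  [(0,false); (3,true)];
  [(0,false); (4,true)];
  [(0,false); (5,true)];
  [(0,false); (7,true)];
  [(0,false); (9,true)];
  [(0,true); (1,false); (2,true); (3,true); (4,false); (5,true); (6,true); (7,true); (8,true); (9,true); (10,true)];
  [(0,true); (1,false); (2,true); (3,true); (4,true); (5,false); (6,true); (7,true); (8,true); (9,true); (10,true)];
  [(0,true); (1,false); (2,true); (3,true); (4,true); (5,true); (6,false); (7,true); (8,true); (9,true); (10,true)];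
  [(0,true); (1,false); (2,true); (3,true); (4,true); (5,true); (6,true); (7,false); (8,true); (9,true); (10,true)];
  [(0,true); (1,false); (2,true); (3,true); (4,true); (5,true); (6,true); (7,true); (8,false); (9,true); (10,true)];
  [(0,true); (1,false); (2,true); (3,true); (4,true); (5,true); (6,true); (7,true); (8,true); (9,true); (10,false)];
  [(0,true); (1,false)];
  [(0,true); (1,true); (2,true); (3,false); (4,true); (5,true); (6,true); (7,true); (8,true); (9,false); (10,true)];
  [(0,true); (1,true); (2,true); (3,false); (4,true); (5,true); (6,true); (7,true); (8,true); (9,true); (10,false)];
  [(0,true); (1,true); (2,true); (3,true); (4,false); (5,false); (6,true); (7,true); (8,true); (9,true); (10,true)];
  [(0,true); (1,true); (2,true); (3,true); (4,false); (5,true); (6,false); (7,true); (8,true); (9,true); (10,true)];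
  [(0,true); (1,true); (2,true); (3,true); (4,false); (5,true); (6,true); (7,false); (8,true); (9,true); (10,true)];
  [(0,true); (1,true); (2,true); (3,true); (4,false); (5,true); (6,true); (7,true); (8,false); (9,true); (10,true)];
  [(0,true); (1,true); (2,true); (3,true); (4,false); (5,true); (6,true); (7,true); (8,true); (9,false); (10,true)];
  [(0,true); (1,true); (2,true); (3,true); (4,false); (5,true); (6,true); (7,true); (8,true); (9,true); (10,false)];
  [(0,true); (1,true); (2,true); (3,true); (4,true); (5,false); (6,false); (7,true); (8,true); (9,true); (10,true)];
  [(0,true); (1,true); (2,true); (3,true); (4,true); (5,false); (6,true); (7,true); (8,false); (9,true); (10,true)];
  [(0,true); (1,true); (2,true); (3,true); (4,true); (5,false); (6,true); (7,true); (8,true); (9,false); (10,true)];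
  [(0,true); (1,true); (2,true); (3,true); (4,true); (5,false); (6,true); (7,true); (8,true); (9,true); (10,false)];
  [(0,true); (1,true); (2,true); (3,true); (4,true); (5,true); (6,false); (7,false); (8,true); (9,true); (10,true)];
  [(0,true); (1,true); (2,true); (3,true); (4,true); (5,true); (6,false); (7,true); (8,false); (9,true); (10,true)];
  [(0,true); (1,true); (2,true); (3,true); (4,true); (5,true); (6,false); (7,true); (8,true); (9,false); (10,true)];
  [(0,true); (1,true); (2,true); (3,true); (4,true); (5,true); (6,false); (7,true); (8,true); (9,true); (10,false)];
  [(0,true); (1,true); (2,true); (3,true); (4,true); (5,true); (6,true); (7,false); (8,true); (9,true); (10,false)];
  [(0,true); (1,true); (2,true); (3,true); (4,true); (5,true); (6,true); (7,true); (8,false); (9,false); (10,true)];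
  [(0,true); (1,true); (2,true); (3,true); (4,true); (5,true); (6,true); (7,true); (8,false); (9,true); (10,false)];
  [(0,true); (1,true); (2,true); (3,true); (4,true); (5,true); (6,true); (7,true); (8,true); (9,false); (10,false)];
  [(0,true); (2,false)];
  [(0,true); (4,false)];
  [(0,true); (6,false)];
  [(0,true); (8,false)];
  [(0,true); (10,false)];
  [(1,false); (2,true)];
  [(1,false); (3,true)];
  [(1,false); (4,true)];
  [(1,false); (5,true)];
  [(1,false); (6,true)];
  [(1,false); (7,true)];
  [(1,false); (8,true)];
  [(1,false); (9,true)];
  [(1,true); (8,false)];
  [(1,true); (10,false)];
  [(2,false); (3,true)];
  [(2,false); (5,true)];
  [(2,false); (6,true)];
  [(2,false); (7,true)];
  [(2,false); (9,true)];
  [(2,false); (10,true)];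
  [(2,true); (4,false)];
  [(2,true); (8,false)];
  [(2,true); (10,false)];
  [(3,false); (4,true)];
  [(3,false); (9,false)];
  [(3,false); (9,true)];
  [(3,true); (5,false)];
  [(3,true); (6,false)];
  [(3,true); (7,false)];
  [(3,true); (8,false)];
  [(3,true); (10,false)];
  [(4,false); (7,false)];
  [(4,false); (8,true)];
  [(4,true); (5,false)];
  [(4,true); (6,false)];
  [(4,true); (7,false)];
  [(4,true); (8,false)];
  [(4,true); (9,false)];
  [(4,true); (10,false)];
  [(5,false); (6,false)];
  [(5,false); (6,true)];
  [(5,false); (9,true)];
  [(5,true); (7,false)];
  [(5,true); (8,false)];
  [(5,true); (9,false)];
  [(5,true); (10,false)];
  [(6,false); (9,true)];
  [(6,true); (7,false)];
  [(6,true); (8,false)];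
  [(6,true); (9,false)];
  [(6,true); (10,false)];
  [(7,false); (9,true)];
  [(7,true); (8,false)];
  [(7,true); (10,false)];
  [(8,false); (9,true)];
  [(8,true); (10,false)];
  [(9,true); (10,false)];
  [(4,false)];
  [(6,false)]])%nat
  ([[0; 0; 47946];
  [0; 0; 48219];
  [0; 0; 73854];
  [0; 0; 38850];
  [0; 0; 245696];
  [0; 0; 27670];
  [55569723; 0; 0];
  [0; 0; 384683];
  [0; 0; 6479156];
  [0; 0; 68803];
  [0; 0; 3526568];
  [0; 0; 8463023];
  [0; 0; 3709665];
  [0; 0; 110591];
  [0; 0; 54173];
  [0; 0; 129128];
  [0; 0; 29191];
  [0; 0; 201523];
  [0; 0; 137952];
  [0; 0; 2079183];
  [0; 0; 223608];
  [0; 0; 22270];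
  [0; 0; 141782];
  [0; 0; 132731];
  [0; 0; 44373];
  [0; 0; 83737];
  [0; 0; 19576];
  [0; 0; 105442];
  [0; 0; 58702];
  [0; 0; 26826];
  [0; 0; 78815];
  [0; 0; 106644];
  [0; 0; 45929];
  [0; 0; 140756];
  [0; 0; 31634];
  [0; 0; 100311];
  [0; 0; 40945];
  [0; 0; 11442];
  [0; 0; 117154];
  [0; 0; 17946];
  [0; 0; 4068982];
  [0; 0; 2155272];
  [0; 0; 2167414];
  [0; 0; 2509956];
  [0; 0; 2072172];
  [0; 0; 4366182];
  [0; 0; 3602827];
  [0; 0; 1312196];
  [0; 0; 1600091];
  [0; 0; 1859257];
  [0; 0; 2613880];
  [0; 0; 3801529];
  [0; 0; 1738995];
  [0; 0; 42114];
  [0; 0; 2126758];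
  [0; 0; 9884034];
  [0; 0; 5028978];
  [0; 0; 6547356];
  [0; 0; 6852724];
  [0; 0; 7259502];
  [0; 0; 5983793];
  [0; 0; 7036607];
  [0; 0; 7041737];
  [0; 0; 913150];
  [0; 0; 3750041];
  [171769559; 0; 0];
  [0; 0; 8338206];
  [0; 0; 5833942];
  [0; 0; 3881409];
  [0; 0; 6896621];
  [0; 0; 5301905];
  [0; 0; 4417751];
  [76278910; 0; 0];
  [0; 0; 400423];
  [0; 0; 3732975];
  [0; 0; 2129197];
  [0; 0; 3287124];
  [0; 0; 1758727];
  [0; 0; 2936278];
  [0; 0; 1591792];
  [73740298; 0; 0];
  [0; 0; 2135091];
  [0; 0; 5107771];
  [0; 0; 3910872];
  [0; 0; 2486810];
  [0; 0; 678452];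
  [0; 0; 3302918];
  [0; 0; 2306585];
  [0; 0; 3404757];
  [0; 0; 3554973];
  [0; 0; 1011276];
  [0; 0; 1562735];
  [0; 0; 5804167];
  [0; 0; 3423167];
  [0; 0; 3321677];
  [0; 0; 3990389];
  [0; 0; 3148668];
  [0; 0; 3016392];
  [93; 0; 0];
  [14; 0; 0]])%Z.

Definition cubic_code : game_code := mkCode 9 82 3
  ([[(0,false); (1,false); (2,true); (3,true); (4,true); (5,true); (6,true); (7,true); (8,true)];
  [(0,false); (1,true); (2,false); (3,true); (4,true); (5,true); (6,true); (7,true); (8,true)];
  [(0,false); (1,true); (2,true); (3,false); (4,true); (5,true); (6,true); (7,true); (8,true)];
  [(0,false); (1,true); (2,true); (3,true); (4,false); (5,true); (6,true); (7,true); (8,true)];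
  [(0,false); (1,true); (2,true); (3,true); (4,true); (5,false); (6,true); (7,true); (8,true)];
  [(0,false); (1,true); (2,true); (3,true); (4,true); (5,true); (6,false); (7,true); (8,true)];
  [(0,false); (1,true); (2,true); (3,true); (4,true); (5,true); (6,true); (7,false); (8,true)];
  [(0,false); (1,true); (2,true); (3,true); (4,true); (5,true); (6,true); (7,true); (8,false)];
  [(0,false); (3,true)];
  [(0,false); (6,true)];
  [(0,false); (8,false)];
  [(0,true); (1,false); (2,false); (3,true); (4,true); (5,true); (6,true); (7,true); (8,true)];
  [(0,true); (1,false); (2,true); (3,false); (4,true); (5,true); (6,true); (7,true); (8,true)];
  [(0,true); (1,false); (2,true); (3,true); (4,false); (5,true); (6,true); (7,true); (8,true)];
  [(0,true); (1,false); (2,true); (3,true); (4,true); (5,false); (6,true); (7,true); (8,true)];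
  [(0,true); (1,false); (2,true); (3,true); (4,true); (5,true); (6,false); (7,true); (8,true)];
  [(0,true); (1,false); (2,true); (3,true); (4,true); (5,true); (6,true); (7,false); (8,true)];
  [(0,true); (1,false); (2,true); (3,true); (4,true); (5,true); (6,true); (7,true); (8,false)];
  [(0,true); (1,false)];
  [(0,true); (1,true); (2,false); (3,false); (4,true); (5,true); (6,true); (7,true); (8,true)];
  [(0,true); (1,true); (2,false); (3,true); (4,false); (5,true); (6,true); (7,true); (8,true)];
  [(0,true); (1,true); (2,false); (3,true); (4,true); (5,false); (6,true); (7,true); (8,true)];
  [(0,true); (1,true); (2,false); (3,true); (4,true); (5,true); (6,false); (7,true); (8,true)];
  [(0,true); (1,true); (2,false); (3,true); (4,true); (5,true); (6,true); (7,false); (8,true)];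
  [(0,true); (1,true); (2,false); (3,true); (4,true); (5,true); (6,true); (7,true); (8,false)];
  [(0,true); (1,true); (2,true); (3,false); (4,false); (5,true); (6,true); (7,true); (8,true)];
  [(0,true); (1,true); (2,true); (3,false); (4,true); (5,false); (6,true); (7,true); (8,true)];
  [(0,true); (1,true); (2,true); (3,false); (4,true); (5,true); (6,false); (7,true); (8,true)];
  [(0,true); (1,true); (2,true); (3,false); (4,true); (5,true); (6,true); (7,false); (8,true)];
  [(0,true); (1,true); (2,true); (3,false); (4,true); (5,true); (6,true); (7,true); (8,false)];
  [(0,true); (1,true); (2,true); (3,true); (4,false); (5,false); (6,true); (7,true); (8,true)];
  [(0,true); (1,true); (2,true); (3,true); (4,false); (5,true); (6,false); (7,true); (8,true)];
  [(0,true); (1,true); (2,true); (3,true); (4,false); (5,true); (6,true); (7,false); (8,true)];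
  [(0,true); (1,true); (2,true); (3,true); (4,false); (5,true); (6,true); (7,true); (8,false)];
  [(0,true); (1,true); (2,true); (3,true); (4,true); (5,false); (6,false); (7,true); (8,true)];
  [(0,true); (1,true); (2,true); (3,true); (4,true); (5,false); (6,true); (7,false); (8,true)];
  [(0,true); (1,true); (2,true); (3,true); (4,true); (5,false); (6,true); (7,true); (8,false)];
  [(0,true); (1,true); (2,true); (3,true); (4,true); (5,true); (6,false); (7,false); (8,true)];
  [(0,true); (1,true); (2,true); (3,true); (4,true); (5,true); (6,false); (7,true); (8,false)];
  [(0,true); (1,true); (2,true); (3,true); (4,true); (5,true); (6,true); (7,false); (8,false)];
  [(0,true); (1,true); (2,true); (3,true); (4,true); (5,true); (6,true); (7,true); (8,true)];
  [(0,true); (2,false)];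
  [(0,true); (4,false)];
  [(0,true); (5,false)];
  [(0,true); (7,false)];
  [(0,true); (8,false)];
  [(1,false); (2,false)];
  [(1,false); (3,true)];
  [(1,false); (4,true)];
  [(1,false); (6,true)];
  [(1,false); (7,true)];
  [(1,false); (8,true)];
  [(1,true); (2,false)];
  [(1,true); (5,false)];
  [(1,true); (6,false)];
  [(2,false); (3,true)];
  [(2,false); (4,true)];
  [(2,false); (5,true)];
  [(2,false); (6,true)];
  [(2,false); (7,true)];
  [(2,false); (8,true)];
  [(2,true); (4,false)];
  [(2,true); (5,false)];
  [(2,true); (7,false)];
  [(2,true); (8,false)];
  [(3,false); (6,false)];
  [(3,false); (6,true)];
  [(3,true); (4,false)];
  [(3,true); (5,false)];
  [(3,true); (7,false)];
  [(3,true); (8,false)];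
  [(4,false); (7,false)];
  [(4,false); (7,true)];
  [(4,false); (8,true)];
  [(4,true); (5,false)];
  [(4,true); (6,false)];
  [(5,false); (6,true)];
  [(5,false); (7,true)];
  [(5,false); (8,true)];
  [(6,true); (7,false)];
  [(6,true); (8,false)];
  [(7,false); (8,true)]])%nat
  ([[0; 0; 0; 47421];
  [0; 0; 0; 40250];
  [0; 0; 0; 37655];
  [0; 0; 0; 35291];
  [0; 0; 0; 34478];
  [0; 0; 0; 33489];
  [0; 0; 0; 33489];
  [0; 0; 0; 33489];
  [0; 0; 0; 2282455];
  [0; 0; 0; 2339753];
  [125405711; 0; 0; 0];
  [0; 0; 0; 33896];
  [0; 0; 0; 33091];
  [0; 0; 0; 31710];
  [0; 0; 0; 31235];
  [0; 0; 0; 31238];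
  [0; 0; 0; 31238];
  [0; 0; 0; 31238];
  [0; 0; 0; 2167766];
  [0; 0; 0; 29951];
  [0; 0; 0; 30094];
  [0; 0; 0; 30143];
  [0; 0; 0; 29622];
  [0; 0; 0; 29622];
  [0; 0; 0; 29622];
  [0; 0; 0; 29551];
  [0; 0; 0; 29338];
  [0; 0; 0; 29079];
  [0; 0; 0; 29079];
  [0; 0; 0; 29079];
  [0; 0; 0; 28719];
  [0; 0; 0; 28460];
  [0; 0; 0; 28460];
  [0; 0; 0; 28460];
  [0; 0; 0; 28247];
  [0; 0; 0; 28247];
  [0; 0; 0; 28247];
  [0; 0; 0; 27988];
  [0; 0; 0; 27988];
  [0; 0; 0; 27988];
  [0; 0; 0; 2970];
  [0; 0; 0; 2253523];
  [0; 0; 0; 2314965];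
  [0; 0; 0; 2326149];
  [0; 0; 0; 2339753];
  [0; 0; 0; 2339753];
  [53567959; 0; 0; 0];
  [0; 0; 0; 2545701];
  [0; 0; 0; 2630149];
  [0; 0; 0; 1750053];
  [0; 0; 0; 2725243];
  [0; 0; 0; 2725243];
  [0; 0; 0; 2422129];
  [0; 0; 0; 2659200];
  [0; 0; 0; 975190];
  [0; 0; 0; 2659836];
  [0; 0; 0; 1282099];
  [0; 0; 0; 758538];
  [0; 0; 0; 2995437];
  [0; 0; 0; 1291703];
  [0; 0; 0; 2257542];
  [0; 0; 0; 1592353];
  [0; 0; 0; 2189745];
  [0; 0; 0; 1703734];
  [0; 0; 0; 737895];
  [173820344; 0; 0; 0];
  [0; 0; 0; 3102296];
  [0; 0; 0; 2972794];
  [0; 0; 0; 3035896];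
  [0; 0; 0; 3102296];
  [0; 0; 0; 3102296];
  [87003101; 0; 0; 0];
  [0; 0; 0; 3240506];
  [0; 0; 0; 3240506];
  [0; 0; 0; 3158201];
  [0; 0; 0; 3240506];
  [0; 0; 0; 3295092];
  [0; 0; 0; 3295092];
  [0; 0; 0; 3295092];
  [0; 0; 0; 3361491];
  [0; 0; 0; 3361491];
  [0; 0; 0; 3301117]])%Z.

Theorem mainTheorem13 (delta : R) (hdelta : 0 < delta) :
  (exists G1 : game, well_formed G1 /\ unweighted G1 /\ poly_latencies 2 G1 /\
     exists p, is_PoS G1 p /\ 21859 / 10000 - delta <= p) /\
  (exists G2 : game, well_formed G2 /\ unweighted G2 /\ poly_latencies 3 G2 /\
     exists p, is_PoS G2 p /\ 27558 / 10000 - delta <= p).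
Proof.
  split.
  - destruct (certified_instance quadratic_code 21859 10000) as [G [Hwf [Hu [Hpoly [p [Hp Hle]]]]]];
      [lia | lia | vm_compute; reflexivity |].
    exists G. do 3 (split; [assumption |]). exists p. split; [exact Hp | lra].
  - destruct (certified_instance cubic_code 27558 10000) as [G [Hwf [Hu [Hpoly [p [Hp Hle]]]]]];
      [lia | lia | vm_compute; reflexivity |].
    exists G. do 3 (split; [assumption |]). exists p. split; [exact Hp | lra].
Qed.
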